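(* Let $X$ and $Y$ be finite-dimensional real normed spaces and let $P:X\to Y$ be a mapping. Then $P$ is piecewise affine if and only if for every polyhedral partial order $\preceq$ on $Y$ both the $\preceq$-epigraph $\mathrm{epi}_\preceq P:=\{(x,y)\in X\times Y\mid P(x)\preceq y\}$ and the $\preceq$-hypograph $\mathrm{hyp}_\preceq P:=\{(x,y)\in X\times Y\mid y\preceq P(x)\}$ are polyhedral subsets of $X\times Y$.
   Context: A closed halfspace of a finite-dimensional space $Z$ is a set $\{z\in Z\mid a^*(z)\le\alpha\}$ with $a^*$ a nonzero linear functional and $\alpha\in\mathbb{R}$. A convex polyhedral set is an intersection of finitely many closed halfspaces (the whole space counts as convex polyhedral). A (not necessarily convex) set is polyhedral if it is the union of finitely many convex polyhedral sets. A polyhedral covering of a polyhedral set $Q$ is a finite family $\{M_1,\dots,M_k\}$ of convex polyhedral sets with $M_i\subset Q$ and $\bigcup_i M_i=Q$. A mapping $P:X\to Y$ is piecewise affine if there exist a polyhedral covering $\{M_1,\dots,M_k\}$ of $X$ and affine mappings $A_i:X\to Y$ (a linear mapping plus a constant) with $P(x)=A_i(x)$ for all $x\in M_i$, $i=1,\dots,k$. A partial order $\preceq$ on $Y$ is polyhedral if it is compatible with the vector operations (i.e. $y\preceq y'$ implies $y+z\preceq y'+z$ and $\lambda y\preceq\lambda y'$ for $\lambda\ge0$) and its positive cone $\{y\in Y\mid 0\preceq y\}$ is a convex polyhedral set. *)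

From HB Require Import structures.
From mathcomp Require Import all_boot all_order all_algebra.
From mathcomp Require Import reals.
Set Implicit Arguments. Unset Strict Implicit. Unset Printing Implicit Defensive.
Import Order.TTheory GRing.Theory Num.Theory.
Local Open Scope ring_scope.

Section Polyhedral.
Variable R : realType.

Definition is_linear (U V : lmodType R) (f : U -> V) : Prop :=
  forall (a : R) (u v : U), f (a *: u + v) = a *: f u + f v.

Definition is_linear_functional (U : lmodType R) (f : U -> R) : Prop :=
  forall (a : R) (u v : U), f (a *: u + v) = a * f u + f v.

Definition closed_halfspace (U : lmodType R) (H : U -> Prop) : Prop :=
  exists (f : U -> R) (alpha : R),
    is_linear_functional f /\ (exists z, f z != 0) /\
    (forall z, H z <-> f z <= alpha).

Definition convex_polyhedral (U : lmodType R) (Q : U -> Prop) : Prop :=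
  exists (n : nat) (H : 'I_n -> U -> Prop),
    (forall i, closed_halfspace (H i)) /\
    (forall z, Q z <-> forall i, H i z).

Definition polyhedral (U : lmodType R) (Q : U -> Prop) : Prop :=
  exists (n : nat) (M : 'I_n -> U -> Prop),
    (forall i, convex_polyhedral (M i)) /\
    (forall z, Q z <-> exists i, M i z).

Definition is_affine (U V : lmodType R) (A : U -> V) : Prop :=
  exists (L : U -> V) (c : V), is_linear L /\ forall x, A x = L x + c.

Definition piecewise_affine (U V : lmodType R) (P : U -> V) : Prop :=
  exists (k : nat) (M : 'I_k -> U -> Prop) (A : 'I_k -> U -> V),
    (forall i, convex_polyhedral (M i)) /\
    (forall x, exists i, M i x) /\
    (forall i, is_affine (A i)) /\
    (forall i x, M i x -> P x = A i x).

Definition polyhedral_order (V : lmodType R) (le : V -> V -> Prop) : Prop :=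
  (forall y, le y y) /\
  (forall y y', le y y' -> le y' y -> y = y') /\
  (forall y y' y'', le y y' -> le y' y'' -> le y y'') /\
  (forall y y' z, le y y' -> le (y + z) (y' + z)) /\
  (forall (l : R) y y', 0 <= l -> le y y' -> le (l *: y) (l *: y')) /\
  convex_polyhedral (fun y => le 0 y).

Definition epigraph (U V : lmodType R) (le : V -> V -> Prop) (P : U -> V)
  : U * V -> Prop := fun p => le (P p.1) p.2.

Definition hypograph (U V : lmodType R) (le : V -> V -> Prop) (P : U -> V)
  : U * V -> Prop := fun p => le p.2 (P p.1).

End Polyhedral.

From HB Require Import structures.
From mathcomp Require Import all_boot all_order all_algebra.
From mathcomp Require Import reals boolp ring lra zify.
Import Order.TTheory GRing.Theory Num.Theory.
Local Open Scope ring_scope.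
Set Implicit Arguments. Unset Strict Implicit.

(** For a piecewise affine [P], each piece of the epigraph (or hypograph) is
    the set of [(x, y)] with [x] in a polyhedral piece [M_i] and [y - A_i x]
    in the positive cone, an affine preimage of a convex polyhedral set.
    Conversely, equality is a polyhedral order, whose epigraph is the graph of
    [P]; a convex subset of a graph spans an affine subspace that is still a
    graph, so on each convex piece of the graph [P] coincides with an affine
    map. *)

Lemma forall_ordS n (P : 'I_n.+1 -> Prop) :
  (forall i, P i) <-> (forall j : 'I_n, P (lift ord_max j)) /\ P ord_max.
Proof.
split=> [H|[H1 H2] i]; first by split.
by case: (unliftP ord_max i) => [j ->|->].
Qed.

Lemma forall_split m n (P : 'I_(m + n) -> Prop) :
  (forall i, P i) <-> (forall j, P (lshift n j)) /\ (forall k, P (rshift m k)).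
Proof.
split=> [H|[Hl Hr] i]; first by split.
by rewrite -(splitK i); case: (split i).
Qed.

Definition ord_cat (T : Type) m n (p : 'I_m -> T) (q : 'I_n -> T) (i : 'I_(m + n)) : T :=
  match split i with inl j => p j | inr k => q k end.

Lemma ord_cat_lshift T m n (p : 'I_m -> T) (q : 'I_n -> T) j :
  ord_cat p q (lshift n j) = p j.
Proof. by rewrite /ord_cat (unsplitK (inl j)). Qed.

Lemma ord_cat_rshift T m n (p : 'I_m -> T) (q : 'I_n -> T) k :
  ord_cat p q (rshift m k) = q k.
Proof. by rewrite /ord_cat (unsplitK (inr k)). Qed.

Lemma bigcap_closed (U : Type) (F : (U -> Prop) -> Prop) :
  (forall Q Q', F Q -> (forall z, Q z <-> Q' z) -> F Q') ->
  F (fun _ => True) ->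
  (forall Q1 Q2, F Q1 -> F Q2 -> F (fun z => Q1 z /\ Q2 z)) ->
  forall n (Q : 'I_n -> U -> Prop), (forall i, F (Q i)) ->
  F (fun z => forall i, Q i z).
Proof.
move=> Fext FT FI; elim=> [|n IH] Q FQ.
  by apply: Fext FT _ => z; split=> // _ [].
apply: Fext (FI _ _ (IH _ (fun j => FQ (lift ord_max j))) (FQ ord_max)) _.
by move=> z; rewrite forall_ordS.
Qed.

Lemma fst_sum (U V : nmodType) (I : Type) (r : seq I) (P : pred I) (F : I -> U * V) :
  (\sum_(i <- r | P i) F i).1 = \sum_(i <- r | P i) (F i).1.
Proof. exact: big_morph. Qed.

Lemma snd_sum (U V : nmodType) (I : Type) (r : seq I) (P : pred I) (F : I -> U * V) :
  (\sum_(i <- r | P i) F i).2 = \sum_(i <- r | P i) (F i).2.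
Proof. exact: big_morph. Qed.

Section Polyhedra.
Variable R : realType.

Section LinearAffine.
Implicit Types U V W : lmodType R.

Lemma linear_functionalD U (f : U -> R) : is_linear_functional f ->
  forall u v, f (u + v) = f u + f v.
Proof. by move=> Hf u v; rewrite -[u in LHS]scale1r Hf mul1r. Qed.

Lemma linear_functional0 U (f : U -> R) : is_linear_functional f -> f 0 = 0.
Proof.
by move=> Hf; apply: (addrI (f 0)); rewrite -linear_functionalD // !addr0.
Qed.

Lemma linear_functionalZ U (f : U -> R) : is_linear_functional f ->
  forall a u, f (a *: u) = a * f u.
Proof. by move=> Hf a u; rewrite -[a *: u]addr0 Hf linear_functional0 ?addr0. Qed.

Lemma linear_functionalN U (f : U -> R) : is_linear_functional f ->
  is_linear_functional (fun z => - f z).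
Proof. by move=> Hf a u v; rewrite Hf opprD mulrN. Qed.

Lemma linear_functional_comp U V (L : U -> V) (f : V -> R) :
  is_linear L -> is_linear_functional f -> is_linear_functional (fun z => f (L z)).
Proof. by move=> HL Hf a u v; rewrite HL Hf. Qed.

Lemma is_linearD U V (L : U -> V) : is_linear L -> forall u v, L (u + v) = L u + L v.
Proof. by move=> HL u v; rewrite -[u in LHS]scale1r HL scale1r. Qed.

Lemma is_linearB U V (L : U -> V) : is_linear L -> forall u v, L (u - v) = L u - L v.
Proof. by move=> HL u v; rewrite addrC -scaleN1r HL scaleN1r addrC. Qed.

Lemma is_affine_linear U V (L : U -> V) : is_linear L -> is_affine L.
Proof. by move=> HL; exists L, 0; split=> // x; rewrite addr0. Qed.

Lemma is_affine_fst U V : is_affine (fun z : U * V => z.1).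
Proof. exact: is_affine_linear. Qed.

Lemma is_affine_snd U V : is_affine (fun z : U * V => z.2).
Proof. exact: is_affine_linear. Qed.

Lemma is_affine_comp U V W (A : V -> W) (B : U -> V) :
  is_affine A -> is_affine B -> is_affine (fun z => A (B z)).
Proof.
move=> [L [c [HL EA]]] [L' [c' [HL' EB]]].
exists (fun z => L (L' z)), (L c' + c); split=> [a u v|z].
  by rewrite HL' HL.
by rewrite EA EB is_linearD // addrA.
Qed.

Lemma is_affineB U V (A B : U -> V) :
  is_affine A -> is_affine B -> is_affine (fun z => A z - B z).
Proof.
move=> [L [c [HL EA]]] [L' [c' [HL' EB]]].
exists (fun z => L z - L' z), (c - c'); split=> [a u v|z].
  by rewrite HL HL' scalerBr opprD addrACA.
by rewrite EA EB opprD addrACA.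
Qed.

Lemma is_affine_pair U V W (A : U -> V) (B : U -> W) :
  is_affine A -> is_affine B -> is_affine (fun z => (A z, B z)).
Proof.
move=> [L [c [HL EA]]] [L' [c' [HL' EB]]].
exists (fun z => (L z, L' z)), (c, c'); split=> [a u v|z].
  by rewrite HL HL'.
by rewrite EA EB.
Qed.

End LinearAffine.

Definition convex (U : lmodType R) (C : U -> Prop) :=
  forall z z' (t : R), 0 <= t <= 1 -> C z -> C z' -> C (t *: z + (1 - t) *: z').

(** Unlike [convex_polyhedral], a [polyhedron] may use vanishing
    functionals; this makes the notion stable under affine preimages, and it
    agrees with [convex_polyhedral] once the space has a nonzero functional. *)
Definition polyhedron (U : lmodType R) (Q : U -> Prop) :=
  exists n (f : 'I_n -> U -> R) (a : 'I_n -> R),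
    (forall i, is_linear_functional (f i)) /\ forall z, Q z <-> forall i, f i z <= a i.

Section PolyhedronTheory.
Variables U V : lmodType R.
Implicit Types Q : U -> Prop.

Lemma polyhedron_ext Q Q' : polyhedron Q -> (forall z, Q z <-> Q' z) -> polyhedron Q'.
Proof. by move=> [n [f [a [Hf HQ]]]] E; exists n, f, a; split=> // z; rewrite -E. Qed.

Lemma polyhedron_le (f : U -> R) a :
  is_linear_functional f -> polyhedron (fun z => f z <= a).
Proof.
move=> Hf; exists 1%N, (fun _ => f), (fun _ => a); split=> // z.
by split=> [H _|H]; [exact: H | exact: (H ord0)].
Qed.

Lemma polyhedronT : polyhedron (fun _ : U => True).
Proof.
exists 0%N, (fun _ _ => 0), (fun _ => 0).
by split=> [[] //|z]; split=> // _ [].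
Qed.

Lemma polyhedronI Q1 Q2 : polyhedron Q1 -> polyhedron Q2 ->
  polyhedron (fun z => Q1 z /\ Q2 z).
Proof.
move=> [n [f [a [Hf HQ1]]]] [m [g [b [Hg HQ2]]]].
exists (n + m)%N, (ord_cat f g), (ord_cat a b); split.
  by apply/forall_split; split=> i; rewrite ?ord_cat_lshift ?ord_cat_rshift.
move=> z; rewrite HQ1 HQ2 forall_split.
by split=> -[H1 H2]; (split=> i; [move: (H1 i) | move: (H2 i)]);
  rewrite ?ord_cat_lshift ?ord_cat_rshift.
Qed.

Lemma polyhedron_bigcap n (Q : 'I_n -> U -> Prop) :
  (forall i, polyhedron (Q i)) -> polyhedron (fun z => forall i, Q i z).
Proof. exact: bigcap_closed polyhedron_ext polyhedronT polyhedronI n Q. Qed.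

Lemma polyhedron_convex_polyhedral Q : convex_polyhedral Q -> polyhedron Q.
Proof.
move=> [n [H [HH HQ]]].
apply: polyhedron_ext (polyhedron_bigcap (Q := H) _) _ => [i|z]; last by rewrite HQ.
have [f [a [Hf [_ E]]]] := HH i.
by apply: polyhedron_ext (polyhedron_le a Hf) _ => z; rewrite E.
Qed.

Lemma polyhedron_affine_preimage (A : V -> U) Q :
  is_affine A -> polyhedron Q -> polyhedron (fun z => Q (A z)).
Proof.
move=> [L [c [HL EA]]] [n [f [a [Hf HQ]]]].
exists n, (fun i z => f i (L z)), (fun i => a i - f i c); split.
  by move=> i; apply: linear_functional_comp.
by move=> z; rewrite EA HQ; split=> H i; move: (H i);
  rewrite (linear_functionalD (Hf i)) lerBrDr.
Qed.

Lemma polyhedron_convex Q : polyhedron Q -> convex Q.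
Proof.
move=> [n [f [a [Hf HQ]]]] z z' t /andP[t0 t1]; rewrite !HQ => Hz Hz' i.
rewrite (linear_functionalD (Hf i)) !(linear_functionalZ (Hf i)).
by have := Hz i; have := Hz' i; nra.
Qed.

End PolyhedronTheory.

Definition has_nonzero_functional (U : lmodType R) :=
  exists g : U -> R, is_linear_functional g /\ exists z, g z != 0.

Section ConvexPolyhedral.
Variable U : lmodType R.
Implicit Types Q H : U -> Prop.

Lemma convex_polyhedral_ext Q Q' :
  convex_polyhedral Q -> (forall z, Q z <-> Q' z) -> convex_polyhedral Q'.
Proof. by move=> [n [H [HH HQ]]] E; exists n, H; split=> // z; rewrite -E. Qed.

Lemma convex_polyhedralT : convex_polyhedral (fun _ : U => True).
Proof. by exists 0%N, (fun _ _ => True); split=> [[] //|z]; split=> // _ []. Qed.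

Lemma convex_polyhedral_halfspace H : closed_halfspace H -> convex_polyhedral H.
Proof.
exists 1%N, (fun _ => H); split=> // z.
by split=> [Hz _|Hz]; [exact: Hz | exact: (Hz ord0)].
Qed.

Lemma convex_polyhedralI Q1 Q2 : convex_polyhedral Q1 -> convex_polyhedral Q2 ->
  convex_polyhedral (fun z => Q1 z /\ Q2 z).
Proof.
move=> [n [H1 [HH1 HQ1]]] [m [H2 [HH2 HQ2]]].
exists (n + m)%N, (ord_cat H1 H2); split.
  by apply/forall_split; split=> i; rewrite ?ord_cat_lshift ?ord_cat_rshift.
move=> z; rewrite HQ1 HQ2 forall_split.
by split=> -[Hz1 Hz2]; (split=> i; [move: (Hz1 i) | move: (Hz2 i)]);
  rewrite ?ord_cat_lshift ?ord_cat_rshift.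
Qed.

Hypothesis nonzero_functional : has_nonzero_functional U.

Lemma convex_polyhedral_empty : convex_polyhedral (fun _ : U => False).
Proof.
have [g [Hg [z0 gz0]]] := nonzero_functional.
have Hle : closed_halfspace (fun z => g z <= 0).
  by exists g, 0; split=> //; split=> //; exists z0.
have Hge : closed_halfspace (fun z => - g z <= -1).
  exists (fun z => - g z), (-1); split; first exact: linear_functionalN.
  by split=> //; exists z0; rewrite oppr_eq0.
apply: convex_polyhedral_ext (convex_polyhedralI (convex_polyhedral_halfspace Hle)
  (convex_polyhedral_halfspace Hge)) _ => z.
by split=> // -[]; lra.
Qed.

Lemma convex_polyhedral_le (f : U -> R) a :
  is_linear_functional f -> convex_polyhedral (fun z => f z <= a).
Proof.
move=> Hf; case: (pselect (exists z, f z != 0)) => [f_neq0|f_eq0].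
  by apply: convex_polyhedral_halfspace; exists f, a.
have f0 z : f z = 0 by apply/eqP/negPn/negP => fz; apply: f_eq0; exists z.
case: (lerP 0 a) => a0.
  by apply: convex_polyhedral_ext convex_polyhedralT _ => z; rewrite f0.
by apply: convex_polyhedral_ext convex_polyhedral_empty _ => z; rewrite f0; lra.
Qed.

Lemma convex_polyhedral_polyhedron Q : polyhedron Q -> convex_polyhedral Q.
Proof.
move=> [n [f [a [Hf HQ]]]].
apply: convex_polyhedral_ext (bigcap_closed convex_polyhedral_ext
  convex_polyhedralT convex_polyhedralI (fun i => convex_polyhedral_le (a i) (Hf i))) _.
by move=> z; rewrite HQ.
Qed.

End ConvexPolyhedral.

Lemma polyhedral_ext (U : lmodType R) (Q Q' : U -> Prop) :
  polyhedral Q -> (forall z, Q z <-> Q' z) -> polyhedral Q'.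
Proof. by move=> [n [M [HM HQ]]] E; exists n, M; split=> // z; rewrite -E. Qed.

Lemma polyhedral_trivial (U : lmodType R) (Q : U -> Prop) :
  (forall z : U, z = 0) -> polyhedral Q.
Proof.
move=> U0; case: (pselect (Q 0)) => Q0.
  exists 1%N, (fun _ _ => True); split=> [_|z]; first exact: convex_polyhedralT.
  by rewrite (U0 z); split=> // _; exists ord0.
exists 0%N, (fun _ _ => True); split=> [[] //|z].
by rewrite (U0 z); split=> // -[[]].
Qed.

Lemma piecewise_affine_trivial (U V : lmodType R) (P : U -> V) :
  (forall x : U, x = 0) -> piecewise_affine P.
Proof.
move=> U0; exists 1%N, (fun _ _ => True), (fun _ _ => P 0).
split=> [_|]; first exact: convex_polyhedralT.
split=> [x|]; first by exists ord0.
split=> [_|_ x _]; last by rewrite (U0 x).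
by exists (fun _ => 0), (P 0); split=> [a u v|x]; rewrite ?scaler0 ?addr0 ?add0r.
Qed.

Section FiniteDimensional.
Variable X : vectType R.

Lemma coord_linear_functional n (t : n.-tuple X) i : is_linear_functional (coord t i).
Proof. by move=> a u v; rewrite linearP. Qed.

Lemma coord_vbasis_eq0 (x : X) : (forall i, coord (vbasis fullv) i x = 0) -> x = 0.
Proof.
move=> x0; rewrite (coord_vbasis (memvf x)).
by apply: big1 => i _; rewrite x0 scale0r.
Qed.

Lemma nonzero_functionalP : has_nonzero_functional X \/ forall x : X, x = 0.
Proof.
case: (pselect (forall x : X, x = 0)) => [|/existsNP [x x_neq0]]; [by right | left].
have [i xi] : exists i, coord (vbasis fullv) i x != 0.
  apply: contrapT => x_coord0; apply/x_neq0/coord_vbasis_eq0 => i.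
  by apply/eqP/negPn/negP => xi; apply: x_coord0; exists i.
by exists (coord (vbasis fullv) i); split; [exact: coord_linear_functional | exists x].
Qed.

Lemma polyhedral_bigcup n (Q : 'I_n -> X -> Prop) :
  (forall i, polyhedron (Q i)) -> polyhedral (fun z => exists i, Q i z).
Proof.
case: nonzero_functionalP => [X_nz|X0] HQ; last exact: polyhedral_trivial.
by exists n, Q; split=> // i; exact: convex_polyhedral_polyhedron.
Qed.

Lemma polyhedron_eq0 : polyhedron (fun y : X => 0 = y).
Proof.
pose c i := coord (vbasis (fullv : {vspace X})) i.
have c_lf i : is_linear_functional (c i) by exact: coord_linear_functional.
apply: polyhedron_ext (polyhedron_bigcap (fun i => polyhedronI
  (polyhedron_le 0 (c_lf i)) (polyhedron_le 0 (linear_functionalN (c_lf i))))) _.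
move=> y; split=> [y0|<- i]; last by rewrite /c linear0 oppr0 lexx.
by apply/esym/coord_vbasis_eq0 => i; have := y0 i; rewrite /c; lra.
Qed.

Lemma eq_polyhedral_order : polyhedral_order (fun y y' : X => y = y').
Proof.
split=> //; split=> [y y' -> //|]; split=> [y y' y'' -> -> //|].
split=> [y y' z -> //|]; split=> [l y y' _ -> //|].
case: nonzero_functionalP => [X_nz|X0].
  exact: convex_polyhedral_polyhedron polyhedron_eq0.
by apply: convex_polyhedral_ext (convex_polyhedralT X) _ => y; rewrite (X0 y).
Qed.

Lemma exists_spanning_seq (T : eqType) (S : T -> Prop) (f : T -> X) :
  exists2 s : seq T, (forall w, w \in s -> S w) & (forall w, S w -> f w \in <<map f s>>%VS).
Proof.
(* Induction on the codimension of the span: a vector outside it enlarges [s]. *)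
suff: forall m s, (forall w, w \in s -> S w) ->
    (\dim {:X} - \dim <<map f s>> <= m)%N ->
  exists2 s, (forall w, w \in s -> S w) & (forall w, S w -> f w \in <<map f s>>%VS).
  by move/(_ (\dim {:X}) [::]); apply=> //; exact: leq_subr.
elim=> [|m IH] s sS.
  rewrite leqn0 subn_eq0 => dim_s; exists s => // w _.
  have /eqP -> : <<map f s>>%VS == fullv by rewrite eqEdim subvf.
  exact: memvf.
case: (pselect (forall w, S w -> f w \in <<map f s>>%VS)) => [|]; first by exists s.
move=> /existsNP [w /not_implyP [Sw fw_notin]] dim_s; apply: (IH (w :: s)).
  by move=> w'; rewrite in_cons => /predU1P [->|/sS].
have : (\dim <<map f s>> < \dim <<map f (w :: s)>>)%N.
  rewrite /= span_cons (ltn_leqif (dimv_leqif_sup (addvSr _ _))).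
  apply/negP => sub; apply: fw_notin; apply: (subvP sub).
  exact: subvP (addvSl _ _) _ (memv_line _).
by lia.
Qed.

End FiniteDimensional.

Lemma ratio_in01 (t s : R) : 0 <= t -> 0 <= s -> t + s != 0 -> 0 <= t / (t + s) <= 1.
Proof.
move=> t0 s0 ts0; have ts_gt0 : 0 < t + s by rewrite lt_def ts0 addr_ge0.
by rewrite divr_ge0 ?addr_ge0 //= ler_pdivrMr // mul1r lerDl.
Qed.

Section AffineExtension.
Variables (X : vectType R) (Y : lmodType R) (C : X * Y -> Prop).
Hypothesis C_convex : convex C.
Hypothesis C_functional : forall z z', C z -> C z' -> z.1 = z'.1 -> z.2 = z'.2.
Variable c0 : X * Y.
Hypothesis Cc0 : C c0.

Let shiftC d := C (d + c0).

Lemma shiftC0 : shiftC 0.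
Proof. by rewrite /shiftC add0r. Qed.

Lemma shiftC_convex : convex shiftC.
Proof.
move=> u v t t01 Cu Cv; have := C_convex t01 Cu Cv; rewrite /shiftC.
by rewrite !scalerDr addrACA -scalerDl [t + _]addrC subrK scale1r.
Qed.

Lemma shiftC_scale t u : 0 <= t <= 1 -> shiftC u -> shiftC (t *: u).
Proof.
by move=> t01 Cu; have := shiftC_convex t01 Cu shiftC0; rewrite scaler0 addr0.
Qed.

Lemma shiftC_functional u v : shiftC u -> shiftC v -> u.1 = v.1 -> u.2 = v.2.
Proof. by move=> Cu Cv uv1; apply: addIr; apply: C_functional Cu Cv _; rewrite /= uv1. Qed.

(** The linear span of [shiftC] is [coneC - coneC]. As [shiftC] is star-shaped
    about 0, two cone points with equal first components can be rescaled into
    [shiftC] by a common factor, so this span is again the graph of a map. *)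
Let coneC p := exists t u, [/\ 0 <= t, shiftC u & p = t *: u].

Lemma coneC_shift u : shiftC u -> coneC u.
Proof. by move=> Cu; exists 1, u; rewrite scale1r. Qed.

Lemma coneC_scale a p : 0 <= a -> coneC p -> coneC (a *: p).
Proof.
by move=> a0 [t [u [t0 Cu ->]]]; exists (a * t), u; rewrite scalerA mulr_ge0.
Qed.

Lemma coneC_add p q : coneC p -> coneC q -> coneC (p + q).
Proof.
move=> [t [u [t0 Cu ->]]] [s [v [s0 Cv ->]]].
have [ts0|ts_neq0] := eqVneq (t + s) 0.
  have [-> ->] : t = 0 /\ s = 0 by lra.
  by exists 0, 0; rewrite !scale0r addr0; split=> //; exact: shiftC0.
exists (t + s), ((t / (t + s)) *: u + (1 - t / (t + s)) *: v); split.
- exact: addr_ge0.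
- exact: shiftC_convex (ratio_in01 _ _ _) Cu Cv.
- rewrite scalerDr !scalerA.
  by congr (_ *: _ + _ *: _); field.
Qed.

Lemma coneC_functional p q : coneC p -> coneC q -> p.1 = q.1 -> p.2 = q.2.
Proof.
move=> [t [u [t0 Cu ->]]] [s [v [s0 Cv ->]]] /= tusv1.
have [ts0|ts_neq0] := eqVneq (t + s) 0.
  have [-> ->] : t = 0 /\ s = 0 by lra.
  by rewrite !scale0r.
have scale_ratio r w : (r / (t + s)) *: w = (t + s)^-1 *: (r *: w).
  by rewrite scalerA mulrC.
have r_u := ratio_in01 t0 s0 ts_neq0.
have r_v : 0 <= s / (t + s) <= 1 by rewrite addrC ratio_in01 // addrC.
have := shiftC_functional (shiftC_scale r_u Cu) (shiftC_scale r_v Cv).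
rewrite !scale_ratio /= tusv1 => /(_ erefl).
by apply: scalerI; rewrite invr_eq0.
Qed.

Let spanC w := exists p q, [/\ coneC p, coneC q & w = p - q].

Lemma spanC_shift u : shiftC u -> spanC u.
Proof.
move=> Cu; exists u, 0.
by split; [exact: coneC_shift | exact: coneC_shift shiftC0 | rewrite subr0].
Qed.

Lemma spanC_add w w' : spanC w -> spanC w' -> spanC (w + w').
Proof.
move=> [p [q [Cp Cq ->]]] [p' [q' [Cp' Cq' ->]]].
by exists (p + p'), (q + q'); rewrite opprD addrACA; split=> //; exact: coneC_add.
Qed.

Lemma spanC_scale a w : spanC w -> spanC (a *: w).
Proof.
move=> [p [q [Cp Cq ->]]]; have [a0|a_lt0] := lerP 0 a.
  by exists (a *: p), (a *: q); rewrite scalerBr; split=> //; exact: coneC_scale.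
have na0 : 0 <= - a by lra.
exists (- a *: q), (- a *: p); split; try exact: coneC_scale.
by rewrite !scaleNr opprK scalerBr addrC.
Qed.

Lemma spanC_sum n (F : 'I_n -> X * Y) : (forall i, spanC (F i)) -> spanC (\sum_i F i).
Proof.
move=> spanF; apply: (big_ind spanC) => //; last exact: spanC_add.
exact: spanC_shift shiftC0.
Qed.

Lemma spanC_functional w : spanC w -> w.1 = 0 -> w.2 = 0.
Proof.
move=> [p [q [Cp Cq ->]]] /= /subr0_eq pq1.
by rewrite (coneC_functional Cp Cq pq1) subrr.
Qed.

Lemma linear_on_spanC : exists B : X -> Y, is_linear B /\ forall w, spanC w -> B w.1 = w.2.
Proof.
have [s s_span span_s] := exists_spanning_seq spanC (fun w : X * Y => w.1).
pose t := in_tuple (map fst s); pose n := size (map fst s).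
pose B x := \sum_(i < n) coord t i x *: (nth 0 s i).2.
exists B; split=> [a u v|w spanw].
  rewrite /B scaler_sumr -big_split; apply: eq_bigr => i _ /=.
  by rewrite linearP scalerDl scalerA.
pose w' := \sum_(i < n) coord t i w.1 *: nth 0 s i.
have s_nth (i : 'I_n) : nth 0 s i \in s by rewrite mem_nth // -(size_map fst).
have spanw' : spanC w' by apply: spanC_sum => i; apply/spanC_scale/s_span/s_nth.
have w'1 : w'.1 = w.1.
  rewrite [RHS](coord_span (X := t) (span_s w spanw)) fst_sum; apply: eq_bigr => i _ /=.
  by rewrite (nth_map 0) // -(size_map fst).
have := spanC_functional (spanC_add spanw' (spanC_scale (-1) spanw)).
rewrite /= !scaleN1r w'1 subrr => /(_ erefl) /eqP; rewrite subr_eq0 => /eqP <-.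
by rewrite snd_sum.
Qed.

Lemma affine_extension_at : exists A : X -> Y, is_affine A /\ forall z, C z -> A z.1 = z.2.
Proof.
have [B [linB Bspan]] := linear_on_spanC.
exists (fun x => B x + (c0.2 - B c0.1)); split; first by exists B, (c0.2 - B c0.1).
move=> z Cz; have Cz' : shiftC (z - c0) by rewrite /shiftC subrK.
have := Bspan _ (spanC_shift Cz'); rewrite /= is_linearB // => BzB.
by rewrite addrCA BzB addrC subrK.
Qed.

End AffineExtension.

Lemma convex_graph_affine_extension (X : vectType R) (Y : lmodType R) (C : X * Y -> Prop) :
  convex C -> (forall z z', C z -> C z' -> z.1 = z'.1 -> z.2 = z'.2) ->
  exists A : X -> Y, is_affine A /\ forall z, C z -> A z.1 = z.2.
Proof.
move=> C_convex C_functional; case: (pselect (exists c0, C c0)) => [[c0 Cc0]|C0].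
  exact: affine_extension_at Cc0.
exists (fun _ => 0); split=> [|z Cz]; last by case: C0; exists z.
by exists (fun _ => 0), 0; split=> [a u v|x]; rewrite ?scaler0 ?addr0.
Qed.

Lemma polyhedral_order_le_sub (V : lmodType R) (le : V -> V -> Prop) :
  polyhedral_order le -> forall a b, le a b <-> le 0 (b - a).
Proof.
move=> [_ [_ [_ [le_add _]]]] a b; split=> [/(le_add _ _ (- a))|/(le_add _ _ a)].
  by rewrite subrr.
by rewrite add0r subrK.
Qed.

Lemma polyhedron_order_affine (U V : lmodType R) (le : V -> V -> Prop) (A B : U -> V) :
  polyhedral_order le -> is_affine A -> is_affine B -> polyhedron (fun z => le (A z) (B z)).
Proof.
move=> le_order HA HB; have cone := le_order.2.2.2.2.2.
apply: polyhedron_ext (polyhedron_affine_preimage (is_affineB HB HA)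
  (polyhedron_convex_polyhedral cone)) _ => z.
exact: iff_sym (polyhedral_order_le_sub le_order _ _).
Qed.

Lemma piecewise_affine_polyhedral (X Y : vectType R) (P : X -> Y) (Q : X * Y -> Y -> Prop) :
  piecewise_affine P ->
  (forall A : X -> Y, is_affine A -> polyhedron (fun z => Q z (A z.1))) ->
  polyhedral (fun z => Q z (P z.1)).
Proof.
move=> [k [M [A [HM [M_cover [HA PA]]]]]] HQ.
apply: polyhedral_ext (polyhedral_bigcup (fun i => polyhedronI
  (polyhedron_affine_preimage (@is_affine_fst _ _) (polyhedron_convex_polyhedral (HM i)))
  (HQ _ (HA i)))) _ => z.
split=> [[i [Mi Qi]]|]; first by rewrite (PA _ _ Mi).
by have [i Mi] := M_cover z.1; rewrite (PA _ _ Mi); exists i.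
Qed.

Lemma graph_polyhedral_piecewise_affine (X Y : vectType R) (P : X -> Y) :
  polyhedral (fun z : X * Y => P z.1 = z.2) -> piecewise_affine P.
Proof.
move=> [n [G [HG PG]]].
case: (nonzero_functionalP X) => [X_nz|X0]; last exact: piecewise_affine_trivial.
have G_affine i : exists A, is_affine A /\ forall z, G i z -> A z.1 = z.2.
  apply: convex_graph_affine_extension.
    exact: polyhedron_convex (polyhedron_convex_polyhedral (HG i)).
  move=> z z' Gz Gz' zz'1.
  by rewrite -(PG z).2 -?(PG z').2 ?zz'1 //; exists i.
have [A HA] := choice G_affine.
exists n, (fun i x => G i (x, A i x)), A; split.
  move=> i; apply: (convex_polyhedral_polyhedron X_nz).
  apply: (polyhedron_affine_preimage (A := fun x => (x, A i x))).
    by apply: is_affine_pair (HA i).1; apply: is_affine_linear.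
  exact: polyhedron_convex_polyhedral.
split=> [x|].
  by have [i Gi] := (PG (x, P x)).1 erefl; exists i; rewrite ((HA i).2 _ Gi).
split=> [i|i x Gi]; first exact: (HA i).1.
by apply: (PG (x, A i x)).2; exists i.
Qed.

End Polyhedra.

Unset Implicit Arguments.

Theorem theorem4p2 (R : realType) (X Y : vectType R) (P : X -> Y) :
  piecewise_affine P <->
  (forall le : Y -> Y -> Prop, polyhedral_order le ->
     polyhedral (epigraph le P) /\ polyhedral (hypograph le P)).
Proof.
split=> [PA le le_order | epi_hypo].
  split.
    apply: (piecewise_affine_polyhedral (Q := fun z y => le y z.2)) PA _ => A HA.
    exact: polyhedron_order_affine le_order (is_affine_comp HA (@is_affine_fst _ _ _))
      (@is_affine_snd _ _ _).
  apply: (piecewise_affine_polyhedral (Q := fun z y => le z.2 y)) PA _ => A HA.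
  exact: polyhedron_order_affine le_order (@is_affine_snd _ _ _)
    (is_affine_comp HA (@is_affine_fst _ _ _)).
apply: graph_polyhedral_piecewise_affine.
exact: (epi_hypo _ (eq_polyhedral_order Y)).1.
Qed.
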